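(* Let $(L,|\cdot|)$ be a complete field with a nontrivial discrete non-Archimedean absolute value. Let $\mathcal{T}$ be the set of closed balls $\overline{B(z_0,r)}=\{z\in L:|z-z_0|\le r\}$ with $z_0\in L$ and $r\in|L^*|\cup\{0\}$ (so $L\subset\mathcal T$ via $z\mapsto\overline{B(z,0)}$), endowed with (i) the weak topology, the weakest topology making all maps $x\mapsto|Q(x)|:=\sup_{z\in x}|Q(z)|$ continuous for $Q\in L[T]$, and (ii) the strong topology, induced by the distance $d(x,x')=\max\{|\mathrm{diam}(x\vee x')-\mathrm{diam}(x)|,|\mathrm{diam}(x\vee x')-\mathrm{diam}(x')|\}$, where $\mathrm{diam}(x)=\sup_{z,z'\in x}|z-z'|$ and $x\vee x'$ is the smallest closed ball containing $x$ and $x'$. Let $F\subset L$ be a bounded infinite subset. Then either (1) the weak closure of $F$ in $\mathcal T$ is compact for the strong topology; or (2) there exists a closed ball $x\in\mathcal T$ of positive radius containing infinitely many points $x_n\in F$ such that $x_n\to x$ in the weak topology.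
   Context: Bounded means $\sup_{z\in F}|z|<\infty$. The restriction of $d$ to $L$ is the distance $|z-z'|$. *)

From HB Require Import structures.
From Stdlib Require Import ClassicalEpsilon.
From mathcomp Require Import all_boot all_order all_algebra.
From mathcomp Require Import all_classical all_reals.
Set Implicit Arguments. Unset Strict Implicit. Unset Printing Implicit Defensive.
Import Order.TTheory GRing.Theory Num.Theory.
Local Open Scope classical_set_scope.
Local Open Scope ring_scope.

Section Berkovich.
Variables (K : fieldType) (R : realType) (abs : K -> R).

Record complete_discrete_nonarch_abs : Prop := {
  abs_ge0 : forall x, 0 <= abs x;
  abs_eq0 : forall x, (abs x = 0) <-> (x = 0);
  absM : forall x y, abs (x * y) = abs x * abs y;
  abs_ultra : forall x y, abs (x + y) <= Num.max (abs x) (abs y);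
  abs_nontrivial : exists x, x != 0 /\ abs x != 1;
  (* discreteness: the value group |K^*| is a discrete subgroup of R_{>0}
     (1 is isolated in it) *)
  abs_discrete : exists e : R, 0 < e /\
     forall x, x != 0 -> abs x != 1 -> e <= `|abs x - 1|;
  abs_complete : forall u : nat -> K,
     (forall e : R, 0 < e -> exists N, forall m n, (N <= m)%N -> (N <= n)%N ->
        abs (u m - u n) < e) ->
     exists l, forall e : R, 0 < e -> exists N, forall n, (N <= n)%N ->
        abs (u n - l) < e
}.

Definition radius_set (r : R) : Prop := r = 0 \/ exists a : K, a != 0 /\ abs a = r.

Definition cball (z0 : K) (r : R) : set K := [set z | abs (z - z0) <= r].

Definition is_ball (x : set K) : Prop :=
  exists z0 r, radius_set r /\ x = cball z0 r.

Definition Tball := {x : set K | is_ball x}.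

Lemma is_ball_pt (z : K) : is_ball (cball z 0).
Proof. by exists z, 0; split => //; left. Qed.

Definition pt (z : K) : Tball := exist _ (cball z 0) (is_ball_pt z).

Definition normQ (Q : {poly K}) (x : Tball) : R :=
  sup [set abs Q.[z] | z in sval x].

Definition diam (x : set K) : R :=
  sup [set t | exists z z', x z /\ x z' /\ t = abs (z - z')].

Definition join (x x' : set K) : set K :=
  epsilon (inhabits set0) (fun y => is_ball y /\ x `<=` y /\ x' `<=` y /\
    forall y', is_ball y' -> x `<=` y' -> x' `<=` y' -> y `<=` y').

Definition dist (x x' : Tball) : R :=
  let J := join (sval x) (sval x') in
  Num.max `|diam J - diam (sval x)| `|diam J - diam (sval x')|.

(* weak topology: weakest topology making all x ↦ |Q(x)| continuous;
   U is open iff around each of its points it contains a basic open set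
   {y | |normQ Q y - normQ Q x| < e for Q in a finite list} *)
Definition weak_open (U : set Tball) : Prop :=
  forall x, U x -> exists (Qs : seq {poly K}) (e : R), 0 < e /\
    forall y, (forall Q, Q \in Qs -> `|normQ Q y - normQ Q x| < e) -> U y.

Definition strong_open (U : set Tball) : Prop :=
  forall x, U x -> exists e : R, 0 < e /\ forall y, dist x y < e -> U y.

End Berkovich.

Section Topo.
Variable (T : Type) (op : set (set T)).

Definition closure_of (A : set T) : set T :=
  [set x | forall U, op U -> U x -> exists y, A y /\ U y].

Definition compact_for (A : set T) : Prop :=
  forall (I : Type) (U : I -> set T), (forall i, op (U i)) ->
    A `<=` \bigcup_i U i ->
    exists D : set I, finite_set D /\ A `<=` \bigcup_(i in D) U i.

Definition converges_for (u : nat -> T) (x : T) : Prop :=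
  forall U, op U -> U x -> exists N, forall n, (N <= n)%N -> U (u n).
End Topo.

From HB Require Import structures.
From mathcomp Require Import all_boot all_order all_algebra.
From mathcomp Require Import finmap all_classical all_reals.
From Stdlib Require Import ClassicalEpsilon.
From mathcomp Require Import ring lra.
Import Order.TTheory GRing.Theory Num.Theory.
Local Open Scope classical_set_scope.
Local Open Scope ring_scope.
Set Implicit Arguments. Unset Strict Implicit.

(* If F contains a sequence (u_n) in a ball B(z0, r), r > 0, with
   |u_m - u_n| = r for m <> n, then u_n tends weakly to B(z0, r): a polynomial
   Q of degree d attains the sup of |Q| on B(z0, r) at one of any d + 1 of the
   u_n (Euclidean division by T - u_a and the ultrametric inequality), so
   |Q(u_n)| = |Q|(B(z0, r)) for all but d indices n.
   Otherwise, discreteness of |K^*| gives q < 1 with |a| < |b| ==> |a| <= q|b|,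
   so a q rho-separated sequence in a ball of radius rho would be
   equidistant.  Hence F is totally bounded, and its weak closure contains
   only points: it is the metric closure of F, on which the strong distance
   is |z - z'|.  Completeness and the nested-ball argument then give strong
   compactness. *)

Lemma sup_eq_max (R : realType) (S : set R) m :
  S m -> (forall t, S t -> t <= m) -> sup S = m.
Proof.
move=> Sm ub; apply/eqP; rewrite eq_le; apply/andP; split.
  by apply: ge_sup; [exists m | apply/ubP].
have hs : has_sup S by split; [exists m | exists m; apply/ubP].
exact: (sup_upper_bound hs).
Qed.

Lemma seq_argmax (T : eqType) d (R : orderType d) (f : T -> R) (s : seq T) :
  s != [::] -> exists2 m, m \in s & forall n, n \in s -> (f n <= f m)%O.
Proof.
elim: s => [//|a s IH] _.
have [->|s0] := eqVneq s [::].
  by exists a; [exact: mem_head | move=> n; rewrite inE => /eqP ->].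
have [m ms hm] := IH s0; have [fma|fam] := leP (f m) (f a).
  exists a; first exact: mem_head.
  by move=> n; rewrite in_cons => /orP[/eqP ->//|/hm/le_trans]; apply.
exists m; first by rewrite in_cons ms orbT.
by move=> n; rewrite in_cons => /orP[/eqP ->|/hm//]; exact: ltW.
Qed.

Lemma pos_uniform_seq (T : eqType) (R : realDomainType) (P : T -> R -> Prop)
  (s : seq T) :
  (forall x d d', 0 < d' -> d' <= d -> P x d -> P x d') ->
  (forall x, x \in s -> exists2 d, 0 < d & P x d) ->
  exists2 d, 0 < d & forall x, x \in s -> P x d.
Proof.
move=> mono; elim: s => [|a s IH] h; first by exists 1.
have [da da0 Pa] := h a (mem_head _ _).
have [d d0 Pd] := IH (fun x xs => h x ltac:(by rewrite in_cons xs orbT)).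
have m0 : 0 < Num.min da d by rewrite lt_min da0 d0.
exists (Num.min da d) => // x; rewrite in_cons => /orP[/eqP ->|xs].
  by apply: mono Pa; rewrite ?ge_min ?lexx.
by apply: mono (Pd _ xs); rewrite ?ge_min ?lexx ?orbT.
Qed.

Lemma finite_cover_seq (T I : Type) (W : eqType) (U : I -> set T)
  (A : W -> set T) (ws : seq W) :
  (forall w, w \in ws -> exists D, finite_set D /\ A w `<=` \bigcup_(i in D) U i) ->
  exists D, finite_set D /\ forall w, w \in ws -> A w `<=` \bigcup_(i in D) U i.
Proof.
elim: ws => [|a ws IH] h; first by exists set0; split => //; exact: finite_set0.
have [D1 [fD1 h1]] := h a (mem_head _ _).
have [D2 [fD2 h2]] := IH (fun w wi => h w ltac:(by rewrite in_cons wi orbT)).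
exists (D1 `|` D2); split; first by rewrite finite_setU.
move=> w; rewrite in_cons => /orP[/eqP ->|wi] y Ay.
  by have [i Di Ui] := h1 _ Ay; exists i => //; left.
by have [i Di Ui] := h2 _ wi _ Ay; exists i => //; right.
Qed.

Lemma geometric_lt (R : archiRealFieldType) (q c eps : R) :
  0 <= q -> q < 1 -> 0 < eps -> exists n, q ^+ n * c < eps.
Proof.
move=> q0 q1 eps0; pose e := 1 - q.
have e0 : 0 < e by rewrite subr_gt0.
have bernoulli n : q ^+ n * (1 + n%:R * e) <= 1.
  elim: n => [|n IH]; first by rewrite expr0 mul0r addr0 mulr1.
  have qn0 : 0 <= q ^+ n by exact: exprn_ge0.
  have -> : q ^+ n.+1 * (1 + n.+1%:R * e) =
            q ^+ n * (1 + n%:R * e) - q ^+ n * (e * e) * n.+1%:R.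
    by rewrite exprS /e; ring.
  have := mulr_ge0 (mulr_ge0 qn0 (mulr_ge0 (ltW e0) (ltW e0))) (ler0n R n.+1).
  lra.
have b0 : 0 <= `|c| / (e * eps) by rewrite divr_ge0 // mulr_ge0 // ltW.
exists (Num.bound (`|c| / (e * eps))).
set n := Num.bound _ in b0 *.
have hn : `|c| < n%:R * (e * eps) by rewrite -ltr_pdivrMr ?mulr_gt0 // archi_boundP.
have [->|qn_neq0] := eqVneq (q ^+ n) 0; first by rewrite mul0r.
have qn_gt0 : 0 < q ^+ n by rewrite lt_def qn_neq0 exprn_ge0.
have qne_le1 : q ^+ n * (n%:R * e) <= 1.
  by have := bernoulli n; rewrite mulrDr mulr1; lra.
apply: le_lt_trans (ler_norm _) _; rewrite normrM (gtr0_norm qn_gt0).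
apply: (lt_le_trans (y := q ^+ n * (n%:R * e) * eps)).
  by rewrite -!mulrA ltr_pM2l.
by rewrite ler_piMl // ltW.
Qed.

Lemma eventually_seq (T : eqType) (P : T -> nat -> Prop) (s : seq T) :
  (forall x, x \in s -> exists N, forall n, (N <= n)%N -> P x n) ->
  exists N, forall n, (N <= n)%N -> forall x, x \in s -> P x n.
Proof.
elim: s => [|a s IH] h; first by exists 0%N.
have [Na ha] := h a (mem_head _ _).
have [Ns hs] := IH (fun x xs => h x ltac:(by rewrite in_cons xs orbT)).
exists (maxn Na Ns) => n; rewrite geq_max => /andP[na ns] x.
by rewrite in_cons => /orP[/eqP ->|xs]; [exact: ha | exact: hs].
Qed.

Lemma dependent_choice (T : Type) (P : nat -> T -> Prop)
  (Rel : nat -> T -> T -> Prop) (x0 : T) :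
  P 0%N x0 -> (forall n x, P n x -> exists y, P n.+1 y /\ Rel n x y) ->
  exists u : nat -> T, forall n, P n (u n) /\ Rel n (u n) (u n.+1).
Proof.
move=> P0 step.
have step' n x : exists y, P n x -> P n.+1 y /\ Rel n x y.
  by have [/step[y hy]|] := pselect (P n x); [exists y | exists x].
pose g n x := proj1_sig (cid (step' n x)).
pose u n := iteri n g x0.
have Pu n : P n (u n).
  by elim: n => [//|n IH]; have [] := proj2_sig (cid (step' n (u n))) IH.
by exists u => n; split => //; exact: (proj2_sig (cid (step' n (u n))) (Pu n)).2.
Qed.

Lemma greedy_separated (T : eqType) (A : set T) (near : T -> T -> Prop) :
  ~ (exists ws : seq T, (forall w, w \in ws -> A w) /\
       forall f, A f -> exists2 w, w \in ws & near f w) ->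
  exists u : nat -> T, (forall n, A (u n)) /\
    forall m n, (m < n)%N -> ~ near (u n) (u m).
Proof.
move=> nonet; pose good (ws : seq T) := forall w, w \in ws -> A w.
have step ws : exists f, good ws -> A f /\ forall w, w \in ws -> ~ near f w.
  have [g|] := pselect (good ws); last first.
    by case: ws => [|w ws] ng; [by case: ng | by exists w].
  apply: contrapT => nf; apply: nonet; exists ws; split => // f Af.
  apply: contrapT => nw; apply: nf; exists f => _; split => // w wi nfw.
  by apply: nw; exists w.
pose g ws := proj1_sig (cid (step ws)).
pose L n := iter n (fun ws => g ws :: ws) [::].
have goodL n : good (L n).
  elim: n => [//|n IH] w /=; rewrite in_cons => /orP[/eqP ->|]; last exact: IH.
  exact: (proj2_sig (cid (step (L n))) IH).1.
have memL m n : (m < n)%N -> g (L m) \in L n.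
  elim: n => [//|n IH]; rewrite ltnS leq_eqVlt => /orP[/eqP ->|/IH mn] /=.
    exact: mem_head.
  by rewrite in_cons mn orbT.
exists (fun n => g (L n)); split => [n|m n mn].
  exact: (proj2_sig (cid (step (L n))) (goodL n)).1.
exact: (proj2_sig (cid (step (L n))) (goodL n)).2 _ (memL _ _ mn).
Qed.

Section Berkovich.
Variables (K : fieldType) (R : realType) (abs : K -> R).
Hypothesis Habs : complete_discrete_nonarch_abs abs.

Local Notation Tb := (Tball abs).
Local Notation pt := (pt abs).
Local Notation cball := (cball abs).
Local Notation diam := (diam abs).

Lemma abs0 : abs 0 = 0.
Proof. exact/(abs_eq0 Habs). Qed.

Lemma abs_gt0 x : x != 0 -> 0 < abs x.
Proof.
move=> xn0; rewrite lt_def (abs_ge0 Habs) andbT.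
by apply: contra_neq xn0 => /(abs_eq0 Habs).
Qed.

Lemma abs1 : abs 1 = 1.
Proof.
have a1 : abs 1 != 0 by rewrite gt_eqF // abs_gt0 ?oner_neq0.
by apply: (mulfI a1); rewrite -(absM Habs) !mulr1.
Qed.

Lemma absN x : abs (- x) = abs x.
Proof.
have absN1 : abs (-1) = 1.
  have h : abs (-1) * abs (-1) = 1 by rewrite -(absM Habs) mulrNN mulr1 abs1.
  have := abs_ge0 Habs (-1); nra.
by rewrite -mulN1r (absM Habs) absN1 mul1r.
Qed.

Lemma abs_distC x y : abs (x - y) = abs (y - x).
Proof. by rewrite -absN opprB. Qed.

Lemma absV x : x != 0 -> abs x^-1 = (abs x)^-1.
Proof.
move=> xn0; have ax : abs x != 0 by rewrite gt_eqF // abs_gt0.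
by apply: (mulfI ax); rewrite -(absM Habs) !mulfV // abs1.
Qed.

Lemma abs_ultra_le x y c : abs x <= c -> abs y <= c -> abs (x + y) <= c.
Proof. by move=> hx hy; apply: le_trans (abs_ultra Habs x y) _; rewrite ge_max hx. Qed.

Lemma abs_ultra_trans x y z c :
  abs (x - y) <= c -> abs (y - z) <= c -> abs (x - z) <= c.
Proof. by move=> h1 h2; rewrite -(subrKA y); exact: abs_ultra_le. Qed.

Lemma abs_triangle x y : abs (x + y) <= abs x + abs y.
Proof.
apply: le_trans (abs_ultra Habs x y) _.
by rewrite ge_max lerDl lerDr !(abs_ge0 Habs).
Qed.

Lemma abs_dist_dist x y : `|abs x - abs y| <= abs (x - y).
Proof.
have h1 := abs_triangle (x - y) y; have h2 := abs_triangle (y - x) x.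
rewrite subrK in h1; rewrite subrK abs_distC in h2.
by rewrite ler_norml; apply/andP; split; lra.
Qed.

(* 1 is isolated in |K^*|, hence by multiplicativity so is every value;
   a value |x| <> 1 forces q < 1. *)
Lemma abs_value_gap : exists q : R, [/\ 0 < q, q < 1 &
  forall a b, b != 0 -> abs a < abs b -> abs a <= q * abs b].
Proof.
have [e [e0 He]] := abs_discrete Habs; have [x [xn0 x1]] := abs_nontrivial Habs.
have gap y : y != 0 -> abs y < 1 -> abs y <= 1 - e.
  move=> yn0 y1; have := He y yn0 (negbT (lt_eqF y1)).
  by rewrite ltr0_norm ?subr_lt0 // opprB; lra.
have e1 : e < 1.
  have [xl1|xg1] := ltP (abs x) 1.
    by have := gap x xn0 xl1; have := abs_gt0 xn0; lra.
  have ixn0 : x^-1 != 0 by rewrite invr_eq0.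
  have ix1 : abs x^-1 < 1 by rewrite absV // invf_lt1 ?abs_gt0 // lt_neqAle eq_sym x1.
  by have := gap _ ixn0 ix1; have := abs_gt0 ixn0; lra.
exists (1 - e); split; [lra | lra |] => a b bn0 ab.
have [->|an0] := eqVneq a 0; first by rewrite abs0 mulr_ge0 ?(abs_ge0 Habs) //; lra.
have b0 := abs_gt0 bn0.
have hq : abs (a / b) = abs a / abs b by rewrite (absM Habs) absV.
have q1 : abs (a / b) < 1 by rewrite hq ltr_pdivrMr // mul1r.
by rewrite -ler_pdivrMr // -hq gap // mulf_neq0 // invr_eq0.
Qed.

Lemma cball0_eq z w : cball z 0 w -> w = z.
Proof.
rewrite /cball /= => h; apply/eqP; rewrite -subr_eq0; apply/eqP/(abs_eq0 Habs).
by apply/eqP; rewrite eq_le h (abs_ge0 Habs).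
Qed.

Lemma cball_center z r : 0 <= r -> cball z r z.
Proof. by rewrite /cball /= subrr abs0. Qed.

Lemma Tball_eq_pt (y : Tb) l : sval y = cball l 0 -> y = pt l.
Proof.
case: y => /= s hs eq_s; move: hs; rewrite eq_s => hs.
by congr exist; exact: Prop_irrelevance.
Qed.

Lemma normQ_pt Q z : normQ Q (pt z) = abs Q.[z].
Proof.
apply: sup_eq_max; first by exists z => //; exact: cball_center.
by move=> t [w /cball0_eq -> <-].
Qed.

Lemma normQ_XsubC (y : Tb) z0 (a c : K) :
  sval y = cball z0 (abs a) -> abs (c - z0) <= abs a ->
  normQ ('X - c%:P) y = abs a.
Proof.
move=> hy hc; rewrite /normQ hy; apply: sup_eq_max.
  exists (c + a); last by rewrite hornerXsubC addrC addKr.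
  by rewrite /cball /= addrAC abs_ultra_le.
move=> t [w /= hw <-]; rewrite hornerXsubC.
by apply: abs_ultra_trans hw _; rewrite abs_distC.
Qed.

Lemma is_ball_cball_dist a b : is_ball abs (cball a (abs (a - b))).
Proof.
exists a, (abs (a - b)); split => //.
have [->|abn] := eqVneq a b; first by left; rewrite subrr abs0.
by right; exists (a - b); rewrite subr_eq0.
Qed.

Lemma join_pt a b : join abs (cball a 0) (cball b 0) = cball a (abs (a - b)).
Proof.
pose least y := is_ball abs y /\ cball a 0 `<=` y /\ cball b 0 `<=` y /\
  forall y', is_ball abs y' -> cball a 0 `<=` y' -> cball b 0 `<=` y' -> y `<=` y'.
have sa : cball a 0 `<=` cball a (abs (a - b)).
  by move=> z /cball0_eq ->; exact/cball_center/(abs_ge0 Habs).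
have sb : cball b 0 `<=` cball a (abs (a - b)).
  by move=> z /cball0_eq ->; rewrite /cball /= abs_distC.
have sub y' : is_ball abs y' -> cball a 0 `<=` y' -> cball b 0 `<=` y' ->
    cball a (abs (a - b)) `<=` y'.
  move=> [z1 [r1 [_ ->]]] ya yb z hz.
  have ha : abs (a - z1) <= r1 by apply/ya/cball_center.
  have hb : abs (b - z1) <= r1 by apply/yb/cball_center.
  have hab : abs (a - b) <= r1 by apply: abs_ultra_trans ha _; rewrite abs_distC.
  exact: abs_ultra_trans (le_trans hz hab) ha.
have [jball [ja [jb jmin]]] : least (join abs (cball a 0) (cball b 0)).
  apply: (epsilon_spec (inhabits set0) least).
  by exists (cball a (abs (a - b))); split; [exact: is_ball_cball_dist|].
apply/seteqP; split; first exact: jmin (is_ball_cball_dist a b) sa sb.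
exact: sub.
Qed.

Lemma diam_cball_dist a b : diam (cball a (abs (a - b))) = abs (a - b).
Proof.
apply: sup_eq_max.
  exists a, b; split; first exact/cball_center/(abs_ge0 Habs).
  by rewrite /cball /= abs_distC.
move=> t [z [z' [hz [hz' ->]]]].
by apply: abs_ultra_trans hz _; rewrite abs_distC.
Qed.

Lemma dist_pt a b : dist (pt a) (pt b) = abs (a - b).
Proof.
have diam0 c : diam (cball c 0) = 0.
  by rewrite -{1}abs0 -(subrr c) diam_cball_dist subrr abs0.
rewrite /dist /= join_pt diam_cball_dist !diam0 subr0 maxxx.
exact/ger0_norm/(abs_ge0 Habs).
Qed.

Definition weak_basic (Qs : seq {poly K}) (y0 : Tb) (e : R) : set Tb :=
  [set y | forall Q, Q \in Qs -> `|normQ Q y - normQ Q y0| < e].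

Lemma weak_basic_open Qs y0 e : weak_open (weak_basic Qs y0 e).
Proof.
move=> y hy.
pose P Q d := forall y' : Tb, `|normQ Q y' - normQ Q y| < d ->
   `|normQ Q y' - normQ Q y0| < e.
have [d d0 hd] : exists2 d, 0 < d & forall Q, Q \in Qs -> P Q d.
  apply: pos_uniform_seq => [Q d d' _ dd' h y' hy'|Q hQ].
    exact/h/(lt_le_trans hy').
  exists (e - `|normQ Q y - normQ Q y0|); first by rewrite subr_gt0 hy.
  by move=> y' hy'; apply: le_lt_trans (ler_distD (normQ Q y) _ _) _; lra.
by exists Qs, d; split => // y' hy' Q hQ; apply: hd => //; exact: hy'.
Qed.

Lemma weak_basic_center Qs y e : 0 < e -> weak_basic Qs y e y.
Proof. by move=> e0 Q _; rewrite subrr normr0. Qed.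

Lemma poly_lipschitz (Q : {poly K}) l : exists2 C, 0 <= C &
  forall z, abs (z - l) <= 1 -> abs (Q.[z] - Q.[l]) <= C * abs (z - l).
Proof.
elim/poly_ind: Q => [|p c [C C0 hC]].
  by exists 0 => // z _; rewrite !horner0 subrr abs0 mul0r.
have g := abs_ge0 Habs.
exists (C * (1 + abs l) + abs p.[l]) => [|z hz].
  by rewrite addr_ge0 ?mulr_ge0 ?addr_ge0.
have -> : (p * 'X + c%:P).[z] - (p * 'X + c%:P).[l] =
          (p.[z] - p.[l]) * z + p.[l] * (z - l) by rewrite !hornerE; ring.
apply: le_trans (abs_triangle _ _) _; rewrite !(absM Habs).
have hzl : abs z <= 1 + abs l by have := abs_triangle (z - l) l; rewrite subrK; lra.
have h : abs (p.[z] - p.[l]) * abs z <= C * abs (z - l) * (1 + abs l).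
  by apply: ler_pM; rewrite ?g ?hC.
by rewrite mulrDl mulrAC lerD2r.
Qed.

Definition adherent (F : set K) (l : K) :=
  forall eps : R, 0 < eps -> exists2 f, F f & abs (f - l) < eps.

Lemma adherent_weak_closure (F : set K) l :
  adherent F l -> closure_of (@weak_open K R abs) (pt @` F) (pt l).
Proof.
move=> hl U hU Ul; have [Qs [e [e0 hQ]]] := hU _ Ul.
pose P Q d := forall z, abs (z - l) < d -> `|abs Q.[z] - abs Q.[l]| < e.
have [d d0 hd] : exists2 d, 0 < d & forall Q, Q \in Qs -> P Q d.
  apply: pos_uniform_seq => [Q d d' _ dd' h z hz|Q _].
    exact/h/(lt_le_trans hz).
  have [C C0 hC] := poly_lipschitz Q l.
  exists (Num.min 1 (e / (C + 1))) => [|z].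
    by rewrite lt_min ltr01 divr_gt0 //; lra.
  rewrite lt_min => /andP[z1 ze]; apply: le_lt_trans (abs_dist_dist _ _) _.
  apply: le_lt_trans (hC z (ltW z1)) _.
  have : (C + 1) * abs (z - l) < e by rewrite mulrC -ltr_pdivlMr //; lra.
  have := abs_ge0 Habs (z - l); nra.
have [f Ff hf] := hl d d0.
exists (pt f); split; first by exists f.
by apply: hQ => Q hQin; rewrite !normQ_pt; exact: hd.
Qed.

Lemma weak_closure_adherent (F : set K) l :
  closure_of (@weak_open K R abs) (pt @` F) (pt l) -> adherent F l.
Proof.
move=> hC eps e0.
have [_ [[f Ff <-] hf]] := hC _ (@weak_basic_open [:: 'X - l%:P] (pt l) eps)
   (@weak_basic_center [:: 'X - l%:P] (pt l) eps e0).
exists f => //; have := hf _ (mem_head _ _).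
rewrite !normQ_pt !hornerXsubC subrr abs0 subr0 ger0_norm //; exact: abs_ge0.
Qed.

Definition equidistant (u : nat -> K) (z0 : K) (r : R) :=
  (forall n, abs (u n - z0) <= r) /\ (forall m n, m != n -> abs (u m - u n) = r).

Section Equidistant.
Variables (u : nat -> K) (z0 : K) (r : R).
Hypothesis u_equi : equidistant u z0 r.

Lemma equidistant_poly_le (L : seq nat) (Q : {poly K}) w :
  uniq L -> (size Q <= size L)%N -> abs (w - z0) <= r ->
  Q.[w] = 0 \/ exists2 n, n \in L & abs Q.[w] <= abs Q.[u n].
Proof.
have [u_in u_sep] := u_equi.
elim: L Q => [|a L IH] Q /=.
  by move=> _; rewrite leqn0 size_poly_eq0 => /eqP -> _; left; rewrite horner0.
move=> /andP[aL uL] sQ hw; pose Q1 := Q %/ ('X - (u a)%:P).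
have ev x : Q.[x] = Q1.[x] * (x - u a) + Q.[u a].
  by rewrite {1}(divp_eq Q ('X - (u a)%:P)) modp_XsubC !hornerE.
have sQ1 : (size Q1 <= size L)%N.
  by rewrite size_divp ?polyXsubC_eq0 // size_XsubC leq_subLR add1n.
have [Q1w0|[v vL hv]] := IH Q1 uL sQ1 hw.
  by right; exists a; [exact: mem_head | rewrite ev Q1w0 mul0r add0r].
have va : v != a by apply: contraNneq aL => <-.
have wa : abs (w - u a) <= r by apply: abs_ultra_trans hw _; rewrite abs_distC.
(* |Q1(w) (w - u a)| <= |Q1(u v)| r = |Q1(u v) (u v - u a)|
                      = |Q(u v) - Q(u a)|. *)
have key : abs Q.[w] <= Num.max (abs Q.[u v]) (abs Q.[u a]).
  rewrite ev; apply: abs_ultra_le; last by rewrite le_max lexx orbT.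
  apply: (le_trans (y := abs Q1.[u v] * r)).
    by rewrite (absM Habs) ler_pM ?(abs_ge0 Habs).
  rewrite -(u_sep _ _ va) -(absM Habs) -[Q1.[u v] * _](addrK Q.[u a]) -ev.
  by apply: abs_ultra_le; rewrite ?absN le_max lexx ?orbT.
right; have [va_le|av_lt] := leP (abs Q.[u v]) (abs Q.[u a]).
  by exists a; [exact: mem_head | apply: le_trans key _; rewrite ge_max va_le lexx].
exists v; first by rewrite in_cons vL orbT.
by apply: le_trans key _; rewrite ge_max lexx ltW.
Qed.

Variable X : Tb.
Hypothesis X_ball : sval X = cball z0 r.

Lemma normQ_equidistant_attained (Q : {poly K}) (L : seq nat) :
  uniq L -> (size Q < size L)%N -> exists2 n, n \in L & abs Q.[u n] = normQ Q X.
Proof.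
move=> uL sQL; have L0 : L != [::] by case: L sQL uL.
have [n nL hn] := seq_argmax (fun n => abs Q.[u n]) L0.
exists n => //; rewrite /normQ X_ball; apply/esym/sup_eq_max.
  by exists (u n) => //; exact: u_equi.1.
move=> t [w hw <-]; have [->|[m mL hm]] := equidistant_poly_le uL (ltnW sQL) hw.
  by rewrite abs0 (abs_ge0 Habs).
exact: le_trans hm (hn _ mL).
Qed.

Lemma normQ_equidistant_eventually (Q : {poly K}) :
  exists N, forall n, (N <= n)%N -> abs Q.[u n] = normQ Q X.
Proof.
pose bad := [set n | abs Q.[u n] <> normQ Q X].
have bad_fin : finite_set bad.
  apply: contrapT => /(infinite_set_fset (size Q).+1)[B Bbad sB].
  have [n nB good] := normQ_equidistant_attained (fset_uniq B) sB.
  exact: Bbad _ nB good.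
exists (\max_(n <- fset_set bad) n).+1 => n; rewrite ltnNge => nmax.
apply: contrapT => nbad; move/negP: nmax; apply.
by apply: leq_bigmax_seq => //; rewrite in_fset_set ?inE.
Qed.

Lemma equidistant_weak_cvg :
  converges_for (@weak_open K R abs) (fun n => pt (u n)) X.
Proof.
move=> V hV VX; have [Qs [e [e0 hQ]]] := hV _ VX.
have [N hN] := @eventually_seq _ (fun Q n => abs Q.[u n] = normQ Q X) Qs
  (fun Q _ => normQ_equidistant_eventually Q).
by exists N => n Nn; apply: hQ => Q hQ; rewrite normQ_pt hN // subrr normr0.
Qed.

End Equidistant.

Lemma equidistant_inj (u : nat -> K) z0 r :
  0 < r -> equidistant u z0 r -> injective u.
Proof.
move=> r0 [_ u_sep] m n umn; apply: contrapT => /eqP/u_sep.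
by rewrite umn subrr abs0 => r_eq0; move: r0; rewrite -r_eq0 ltxx.
Qed.

Definition has_equidistant (F : set K) := exists z0 r (u : nat -> K),
  [/\ 0 < r, radius_set abs r, (forall n, F (u n)) & equidistant u z0 r].

Section DiscreteGap.
Variable q : R.
Hypotheses (q_gt0 : 0 < q) (q_lt1 : q < 1)
  (abs_gap : forall a b, b != 0 -> abs a < abs b -> abs a <= q * abs b).

(* Two distances in ]q rho, rho] cannot differ: the smaller one would be at
   most q times the larger one. *)
Lemma separated_equidistant (u : nat -> K) c rho :
  (forall n, abs (u n - c) <= rho) ->
  (forall m n, m != n -> q * rho < abs (u m - u n)) ->
  exists2 r, 0 < r /\ radius_set abs r & equidistant u (u 0%N) r.
Proof.
move=> u_in u_sep.
have u_le m n : abs (u m - u n) <= rho.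
  by apply: abs_ultra_trans (u_in m) _; rewrite abs_distC.
have qrho_ge0 : 0 <= q * rho.
  exact: mulr_ge0 (ltW q_gt0) (le_trans (abs_ge0 Habs _) (u_in 0%N)).
have not_lt m n m' n' : m != n -> m' != n' -> ~ abs (u m - u n) < abs (u m' - u n').
  move=> mn mn' lt; have d0 : u m' - u n' != 0.
    by apply/eqP => d0; move: lt; rewrite d0 abs0 ltNge (abs_ge0 Habs).
  have := abs_gap d0 lt; have := u_sep m n mn.
  have := ler_wpM2l (ltW q_gt0) (u_le m' n').
  lra.
have u_eq m n : m != n -> abs (u m - u n) = abs (u 0%N - u 1%N).
  move=> mn; case: (ltgtP (abs (u m - u n)) (abs (u 0%N - u 1%N))) => // [lt|gt].
    by case: (not_lt m n 0%N 1%N mn isT lt).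
  by case: (not_lt 0%N 1%N m n isT mn gt).
have r0 : 0 < abs (u 0%N - u 1%N) by apply: le_lt_trans qrho_ge0 (u_sep 0%N 1%N isT).
exists (abs (u 0%N - u 1%N)).
  split => //; right; exists (u 0%N - u 1%N); split => //.
  by apply: contraTneq r0 => ->; rewrite abs0 ltxx.
split => [n|]; last exact: u_eq.
have [->|n0] := eqVneq n 0%N; first by rewrite subrr abs0 (abs_ge0 Habs).
by rewrite u_eq.
Qed.

Lemma geometric_limit (cs : nat -> K) rho0 : 0 < rho0 ->
  (forall n, abs (cs n.+1 - cs n) <= q ^+ n * rho0) ->
  exists l, forall n, abs (l - cs n) <= q ^+ n * rho0.
Proof.
move=> rho0_gt0 cs_step.
have qn_le n k : q ^+ (n + k) * rho0 <= q ^+ n * rho0.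
  by rewrite ler_pM2r // exprD ler_piMr ?exprn_ge0 ?exprn_ile1 ?ltW.
have cs_near n m : (n <= m)%N -> abs (cs m - cs n) <= q ^+ n * rho0.
  move=> /subnKC <-; elim: (m - n)%N => [|k IH].
    by rewrite addn0 subrr abs0 mulr_ge0 ?exprn_ge0 ?ltW.
  rewrite addnS; apply: abs_ultra_trans IH; exact: le_trans (cs_step _) (qn_le n k).
have [l cs_lim] : exists l, forall e : R, 0 < e ->
    exists N, forall n, (N <= n)%N -> abs (cs n - l) < e.
  apply: (abs_complete Habs) => e e0.
  have [N hN] := geometric_lt rho0 (ltW q_gt0) q_lt1 e0.
  exists N => m n Nm Nn; apply: le_lt_trans hN.
  by apply: abs_ultra_trans (cs_near _ _ Nm) _; rewrite abs_distC cs_near.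
exists l => n; have [N hN] := cs_lim _ (mulr_gt0 (exprn_gt0 n q_gt0) rho0_gt0).
apply: (abs_ultra_trans (y := cs (maxn N n))).
  by rewrite abs_distC ltW // hN // leq_maxl.
exact: cs_near (leq_maxr _ _).
Qed.

Section NoEquidistant.
Variable F : set K.
Hypothesis F_noequi : ~ has_equidistant F.

Lemma total_bounded c rho : 0 < rho -> exists ws : seq K,
  (forall w, w \in ws -> F w /\ abs (w - c) <= rho) /\
  forall f, F f /\ abs (f - c) <= rho -> exists2 w, w \in ws & abs (f - w) <= q * rho.
Proof.
move=> rho0; apply: contrapT => nonet.
have [u [u_in u_far]] := greedy_separated nonet.
have u_sep m n : m != n -> q * rho < abs (u m - u n).
  move=> mn; rewrite ltNge; apply/negP.
  have [lt|gt|eq] := ltngtP m n; last by rewrite eq eqxx in mn.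
    by rewrite abs_distC; exact: u_far.
  exact: u_far.
have [r [r0 rr] u_equi] := separated_equidistant (fun n => (u_in n).2) u_sep.
by apply: F_noequi; exists (u 0%N), r, u; split => // n; exact: (u_in n).1.
Qed.

Lemma weak_closure_pt y :
  closure_of (@weak_open K R abs) (pt @` F) y -> exists l, y = pt l.
Proof.
move=> yC; case: (svalP y) => z0 [r [[r_eq0|[a [an0 ra]]] hy]].
  by exists z0; apply: Tball_eq_pt; rewrite hy r_eq0.
exfalso; rewrite -ra in hy; have a0 := abs_gt0 an0.
have [ws [ws_in ws_net]] := total_bounded z0 a0.
pose Qs := [seq 'X - w%:P | w <- z0 :: ws].
have e0 : 0 < (1 - q) * abs a by rewrite mulr_gt0 // subr_gt0.
have [_ [[f Ff <-] fU]] :=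
  yC _ (@weak_basic_open Qs y _) (@weak_basic_center Qs y _ e0).
have near_y w : w \in z0 :: ws -> `|abs (f - w) - abs a| < (1 - q) * abs a.
  move=> wi; have := fU _ (map_f _ wi).
  rewrite normQ_pt hornerXsubC (normQ_XsubC hy) //.
  move: wi; rewrite in_cons => /orP[/eqP ->|/ws_in[]//]; exact/cball_center/ltW.
have := near_y z0 (mem_head _ _); rewrite ltr_norml => /andP[fz0_gt fz0_lt].
have [fz0_le|fz0_gt1] := leP (abs (f - z0)) (abs a).
  have [w wi fw] := ws_net f (conj Ff fz0_le).
  have := near_y w ltac:(by rewrite in_cons wi orbT).
  by rewrite ltr_norml => /andP[fw_gt _]; lra.
(* Otherwise |f - z0| lies in ]|a|, (2 - q)|a|[, an interval that the gap
   |a| <= q |f - z0| excludes. *)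
have fz0_neq0 : f - z0 != 0 by apply: contraTneq fz0_gt1 => ->; rewrite abs0 -leNgt ltW.
have := abs_gap fz0_neq0 fz0_gt1.
have : q * abs (f - z0) < q * ((2 - q) * abs a) by rewrite ltr_pM2l //; lra.
have : 0 < (1 - q) * (1 - q) * abs a by rewrite !mulr_gt0 // subr_gt0.
have -> : q * ((2 - q) * abs a) = abs a - (1 - q) * (1 - q) * abs a by ring.
lra.
Qed.

Lemma weak_closureE :
  closure_of (@weak_open K R abs) (pt @` F) = pt @` adherent F.
Proof.
apply/seteqP; split => [y yC|_ [l lF <-]]; last exact: adherent_weak_closure.
have [l yl] := weak_closure_pt yC; rewrite yl in yC *.
by exists l => //; exact: weak_closure_adherent.
Qed.

Definition covered (I : Type) (U : I -> set Tb) c rho := exists D : set I,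
  finite_set D /\
  pt @` [set l | adherent F l /\ abs (l - c) <= rho] `<=` \bigcup_(i in D) U i.

Lemma uncovered_step (I : Type) (U : I -> set Tb) c rho :
  0 < rho -> ~ covered U c rho ->
  exists w, (F w /\ ~ covered U w (q * rho)) /\ abs (w - c) <= rho.
Proof.
move=> rho0 unc; have [ws [ws_in ws_net]] := total_bounded c rho0.
apply: contrapT => all_cov; apply: unc.
have ws_cov w : w \in ws -> covered U w (q * rho).
  move=> wi; apply: contrapT => nc; apply: all_cov; exists w.
  by have [Fw wc] := ws_in w wi.
have [D [fD hD]] := finite_cover_seq ws_cov.
exists D; split => // _ [l [lF lc] <-].
have qrho0 : 0 < q * rho by rewrite mulr_gt0.
have [f Ff fl] := lF _ qrho0; rewrite abs_distC in fl.
have fc : abs (f - c) <= rho.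
  by apply: abs_ultra_trans lc; rewrite abs_distC (le_trans (ltW fl)) // ger_pMl // ltW.
have [w wi fw] := ws_net f (conj Ff fc).
by apply: (hD w wi); exists l => //; split => //; exact: abs_ultra_trans (ltW fl) fw.
Qed.

Lemma uncovered_sequence (I : Type) (U : I -> set Tb) c0 rho0 :
  F c0 -> 0 < rho0 -> ~ covered U c0 rho0 -> exists cs : nat -> K,
  forall n, (F (cs n) /\ ~ covered U (cs n) (q ^+ n * rho0)) /\
            abs (cs n.+1 - cs n) <= q ^+ n * rho0.
Proof.
move=> Fc0 rho0_gt0 unc0.
apply: (@dependent_choice _ (fun n c => F c /\ ~ covered U c (q ^+ n * rho0))
  (fun n c c' => abs (c' - c) <= q ^+ n * rho0) c0); first by rewrite expr0 mul1r.
move=> n c [_ unc]; rewrite exprS -mulrA.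
by apply: uncovered_step unc; rewrite mulr_gt0 // exprn_gt0.
Qed.

Lemma compact_adherent c0 M : F c0 -> (forall z, F z -> abs z <= M) ->
  compact_for (@strong_open K R abs) (pt @` adherent F).
Proof.
move=> Fc0 FM I U U_open cover; apply: contrapT => nofin.
have M0 : 0 <= M by exact: le_trans (abs_ge0 Habs c0) (FM _ Fc0).
have rho0_gt0 : 0 < M + 1 by lra.
have [cs cs_spec] : exists cs : nat -> K,
    forall n, (F (cs n) /\ ~ covered U (cs n) (q ^+ n * (M + 1))) /\
              abs (cs n.+1 - cs n) <= q ^+ n * (M + 1).
  apply: (uncovered_sequence Fc0 rho0_gt0) => -[D [fD hD]].
  apply: nofin; exists D; split => // _ [l lF <-]; apply: hD; exists l => //.
  split => //; have [f Ff fl] := lF 1 ltr01.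
  apply: (abs_ultra_trans (y := f)); first by rewrite abs_distC; lra.
  have := FM _ Ff; have := FM _ Fc0; rewrite -(absN c0) => ? ?.
  by apply: abs_ultra_le; lra.
have [l l_lim] := geometric_limit rho0_gt0 (fun n => (cs_spec n).2).
have lF : adherent F l.
  move=> eps eps0; have [n hn] := geometric_lt (M + 1) (ltW q_gt0) q_lt1 eps0.
  exists (cs n); first exact: (cs_spec n).1.1.
  by rewrite abs_distC (le_lt_trans (l_lim n)).
have [i _ Ui] := cover _ (ex_intro2 _ _ l lF erefl).
have [d [d0 hd]] := U_open i _ Ui.
have [n hn] := geometric_lt (M + 1) (ltW q_gt0) q_lt1 d0.
apply: (cs_spec n).1.2; exists [set i]; split; first exact: finite_set1.
move=> _ [l' [_ l'c] <-]; exists i => //; apply: hd; rewrite dist_pt.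
by apply: le_lt_trans hn; apply: abs_ultra_trans (l_lim n) _; rewrite abs_distC.
Qed.

End NoEquidistant.

End DiscreteGap.

End Berkovich.

Theorem proposition1p3 (K : fieldType) (R : realType) (abs : K -> R)
  (Habs : complete_discrete_nonarch_abs abs) (F : set K)
  (Fbounded : exists M : R, forall z, F z -> abs z <= M)
  (Finf : infinite_set F) :
  compact_for ((@strong_open K R abs)) (closure_of ((@weak_open K R abs)) ((@pt K R abs) @` F))
  \/
  exists (x : (@Tball K R abs)) (z0 : K) (r : R),
    0 < r /\ (@radius_set K R abs) r /\ sval x = (@cball K R abs) z0 r /\
    exists u : nat -> K, injective u /\ (forall n, F (u n)) /\
      (forall n, sval x (u n)) /\
      converges_for ((@weak_open K R abs)) (fun n => (@pt K R abs) (u n)) x.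
Proof.
have [q [q_gt0 q_lt1 abs_gap]] := abs_value_gap Habs.
have [[z0 [r [u [r_gt0 rr Fu u_equi]]]]|noequi] := pselect (has_equidistant abs F).
  have x_ball : is_ball abs (cball abs z0 r) by exists z0, r.
  right; exists (exist _ _ x_ball), z0, r; split => //; split => //; split => //.
  exists u; split; first exact: (equidistant_inj Habs r_gt0 u_equi).
  split => //; split => [n|]; first exact: u_equi.1.
  exact: (equidistant_weak_cvg Habs u_equi).
left; have [c0 Fc0] := infinite_setN0 Finf; have [M FM] := Fbounded.
rewrite (weak_closureE Habs q_gt0 q_lt1 abs_gap noequi).
exact: (compact_adherent Habs q_gt0 q_lt1 abs_gap noequi Fc0 FM).
Qed.
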